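(* Let $(T,\eta,(-)^\#,\sqsubseteq,\Uparrow)$ be a while-monad on $\mathbf{Set}$, $(\Omega,\le)$ a complete lattice, $o:T\Omega\to\Omega$ a meet-preserving Eilenberg–Moore $T$-algebra, $P$ a while program and $b$ a condition. Define $\Phi:\mathbf{Set}_T(\mathbb M,\mathbb M)\to\mathbf{Set}_T(\mathbb M,\mathbb M)$ by $\Phi(f)=\lambda\rho.$ if $\llbracket b\rrbracket\rho=\mathrm{tt}$ then $(f\bullet\llbracket P\rrbracket_T)(\rho)$ else $\eta_{\mathbb M}(\rho)$, and $\Psi$ on join-preserving maps $g:\mathcal P_\Omega(\mathbb M)\to\mathcal P_\Omega(\mathbb M)$ by $\Psi(g)=\lambda\phi.\ g(\llbracket P\rrbracket^c(\phi\wedge_{\mathbb M}\mathrm{grd}_b^{\mathrm{tt}}))\vee_{\mathbb M}(\phi\wedge_{\mathbb M}\mathrm{grd}_b^{\mathrm{ff}})$. Then $\Psi$ maps join-preserving maps to join-preserving maps, and $\Psi\circ sp^o=sp^o\circ\Phi$, i.e. $\Psi(sp^o(f))=sp^o(\Phi(f))$ for every $f\in\mathbf{Set}_T(\mathbb M,\mathbb M)$.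
   Context: Fix a set of values $\mathbb V$, a finite set of variables $X$, and memories $\mathbb M=\mathbb V^X$. Programs: $P::=\mathtt{skip}\mid P;P\mid x:=e\mid \mathtt{if}\ b\ \{P\}\ \mathtt{else}\ \{P\}\mid \mathtt{while}\ b\ \{P\}$. Each condition $b$ has a given interpretation $\llbracket b\rrbracket:\mathbb M\to\{\mathrm{ff},\mathrm{tt}\}$. A while-monad on $\mathbf{Set}$ is a monad $(T,\eta,(-)^\#)$ on $\mathbf{Set}$ together with an $\omega$-cpo structure $(\sqsubseteq_X,\Uparrow_X)$ on each $TX$, such that, with $\sqsubseteq_{X,Y}$ the pointwise order on Kleisli maps $\mathbf{Set}_T(X,Y)=\mathbf{Set}(X,TY)$ and $\Uparrow_{X,Y}=\lambda x.\Uparrow_Y$: Kleisli composition $g\bullet f=g^\#\circ f$ is monotone and $\omega$-continuous in each argument, and $f\bullet\Uparrow_{X,Y}=\Uparrow_{X,Z}$. Monadic semantics: each assignment has a given $\llbracket x:=e\rrbracket\in\mathbf{Set}_T(\mathbb M,\mathbb M)$, and $\llbracket\mathtt{skip}\rrbracket_T=\eta_{\mathbb M}$, $\llbracket P;P'\rrbracket_T=\llbracket P'\rrbracket_T\bullet\llbracket P\rrbracket_T$, $\llbracket x:=e\rrbracket_T=\llbracket x:=e\rrbracket$, $\llbracket\mathtt{if}\ b\ \{P_1\}\ \mathtt{else}\ \{P_2\}\rrbracket_T=\lambda\rho.$ if $\llbracket b\rrbracket\rho=\mathrm{tt}$ then $\llbracket P_1\rrbracket_T(\rho)$ else $\llbracket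 P_2\rrbracket_T(\rho)$, and $\llbracket\mathtt{while}\ b\ \{P\}\rrbracket_T$ is the least fixpoint of the map $\Phi$ above. $\mathcal P_\Omega(Y)=(\mathbf{Set}(Y,\Omega),\le_Y)$ with pointwise order and lattice operations $\wedge_Y,\vee_Y,\bot_Y,\top_Y$. An Eilenberg–Moore algebra $o$ is meet-preserving if each $\phi\mapsto o\circ T\phi:\mathcal P_\Omega(Y)\to\mathcal P_\Omega(TY)$ preserves arbitrary meets. For $f\in\mathbf{Set}_T(Y,Z)$, $wp^o(f)(\phi)=o\circ T\phi\circ f$ and $sp^o(f)$ is the left adjoint of $wp^o(f)$. $\llbracket P\rrbracket^c=sp^o(\llbracket P\rrbracket_T)$. $\mathrm{grd}_b^v(\rho)=\top$ if $\llbracket b\rrbracket\rho=v$, else $\bot$. *)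

From mathcomp Require Import all_boot.
Set Implicit Arguments.
Unset Strict Implicit.
Unset Printing Implicit Defensive.

(* A monad in Kleisli-triple form (T, ret = eta, bind), with bind x f  *)
(* = f^# x, together with an omega-cpo (le, bot = Uparrow, sup of      *)
(* omega-chains) on each T A, satisfying the while-monad axioms on the *)
(* Kleisli composition  g \bullet f = g^# o f.                          *)
Record whileMonad (T : Type -> Type) := WhileMonad {
  ret : forall A : Type, A -> T A;
  bind : forall A B : Type, T A -> (A -> T B) -> T B;
  bind_ret_l : forall (A B : Type) (a : A) (f : A -> T B), bind (ret a) f = f a;
  bind_ret_r : forall (A : Type) (m : T A), bind m (@ret A) = m;
  bind_assoc : forall (A B C : Type) (m : T A) (f : A -> T B) (g : B -> T C),
      bind (bind m f) g = bind m (fun x => bind (f x) g);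
  tle : forall A : Type, T A -> T A -> Prop;
  tle_refl : forall A (t : T A), tle t t;
  tle_trans : forall A (t u v : T A), tle t u -> tle u v -> tle t v;
  tle_antisym : forall A (t u : T A), tle t u -> tle u t -> t = u;
  tbot : forall A : Type, T A;
  tbot_least : forall A (t : T A), tle (tbot A) t;
  tsup : forall A : Type, (nat -> T A) -> T A;
  tsup_ub : forall A (c : nat -> T A), (forall n, tle (c n) (c n.+1)) ->
      forall n, tle (c n) (tsup c);
  tsup_least : forall A (c : nat -> T A) (u : T A),
      (forall n, tle (c n) (c n.+1)) -> (forall n, tle (c n) u) -> tle (tsup c) u;
  kcomp_mono_l : forall (X Y Z : Type) (f : X -> T Y) (g g' : Y -> T Z),
      (forall y, tle (g y) (g' y)) ->
      forall x, tle (bind (f x) g) (bind (f x) g');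
  kcomp_mono_r : forall (X Y Z : Type) (f f' : X -> T Y) (g : Y -> T Z),
      (forall x, tle (f x) (f' x)) ->
      forall x, tle (bind (f x) g) (bind (f' x) g);
  kcomp_cont_l : forall (X Y Z : Type) (f : X -> T Y) (c : nat -> Y -> T Z),
      (forall n y, tle (c n y) (c n.+1 y)) ->
      forall x, bind (f x) (fun y => tsup (fun n => c n y))
                = tsup (fun n => bind (f x) (c n));
  kcomp_cont_r : forall (X Y Z : Type) (c : nat -> X -> T Y) (g : Y -> T Z),
      (forall n x, tle (c n x) (c n.+1 x)) ->
      forall x, bind (tsup (fun n => c n x)) g
                = tsup (fun n => bind (c n x) g);
  kcomp_bot : forall (X Y Z : Type) (f : Y -> T Z) (x : X),
      bind ((fun _ : X => tbot Y) x) f = (fun _ : X => tbot Z) x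
}.

Arguments ret {T} w {A}.
Arguments bind {T} w {A B}.
Arguments tle {T} w {A}.
Arguments tbot {T} w {A}.
Arguments tsup {T} w {A}.

Section Kleisli.
Variables (T : Type -> Type) (W : whileMonad T).

Definition kcomp (X Y Z : Type) (g : Y -> T Z) (f : X -> T Y) : X -> T Z :=
  fun x => bind W (f x) g.

Definition tmap (A B : Type) (phi : A -> B) (t : T A) : T B :=
  bind W t (fun a => ret W (phi a)).

Definition kbot (X Y : Type) : X -> T Y := fun _ => tbot W.
Definition ksup (X Y : Type) (c : nat -> X -> T Y) : X -> T Y :=
  fun x => tsup W (fun n => c n x).

Definition klfp (X Y : Type) (F : (X -> T Y) -> (X -> T Y)) : X -> T Y :=
  ksup (fun n => iter n F (@kbot X Y)).
End Kleisli.

Inductive prog (X : Type) (E Bc : Type) :=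
| Skip
| Seq of prog X E Bc & prog X E Bc
| Assign of X & E
| Ite of Bc & prog X E Bc & prog X E Bc
| While of Bc & prog X E Bc.

Arguments Skip {X E Bc}.

Section Semantics.
Variables (T : Type -> Type) (W : whileMonad T).
Variables (V : Type) (X : finType) (E Bc : Type).
Notation M := (X -> V).
Variable bsem : Bc -> M -> bool.
Variable asem : X -> E -> M -> T M.

Definition PhiW (b : Bc) (Pc : M -> T M) (f : M -> T M) : M -> T M :=
  fun rho => if bsem b rho then kcomp W f Pc rho else ret W rho.

Fixpoint psem (p : prog X E Bc) : M -> T M :=
  match p with
  | Skip => fun rho => ret W rho
  | Seq p1 p2 => kcomp W (psem p2) (psem p1)
  | Assign x e => asem x e
  | Ite b p1 p2 => fun rho => if bsem b rho then psem p1 rho else psem p2 rho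
  | While b p1 => klfp W (PhiW b (psem p1))
  end.
End Semantics.

Record completeLattice (O : Type) := CompleteLattice {
  ole : O -> O -> Prop;
  ole_refl : forall x, ole x x;
  ole_trans : forall x y z, ole x y -> ole y z -> ole x z;
  ole_antisym : forall x y, ole x y -> ole y x -> x = y;
  oinf : (O -> Prop) -> O;
  oinf_lb : forall (S : O -> Prop) x, S x -> ole (oinf S) x;
  oinf_glb : forall (S : O -> Prop) y, (forall x, S x -> ole y x) -> ole y (oinf S);
  osup : (O -> Prop) -> O;
  osup_ub : forall (S : O -> Prop) x, S x -> ole x (osup S);
  osup_lub : forall (S : O -> Prop) y, (forall x, S x -> ole x y) -> ole (osup S) y
}.

Section Predicates.
Variables (O : Type) (L : completeLattice O).

(* P_Omega(Y) = (Y -> Omega) with pointwise order and lattice operations *)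
Definition ple (Y : Type) (phi psi : Y -> O) := forall y, ole L (phi y) (psi y).
Definition pinf (Y : Type) (S : (Y -> O) -> Prop) : Y -> O :=
  fun y => oinf L (fun w => exists phi, S phi /\ w = phi y).
Definition psup (Y : Type) (S : (Y -> O) -> Prop) : Y -> O :=
  fun y => osup L (fun w => exists phi, S phi /\ w = phi y).
Definition pmeet (Y : Type) (phi psi : Y -> O) : Y -> O :=
  pinf (fun chi => chi = phi \/ chi = psi).
Definition pjoin (Y : Type) (phi psi : Y -> O) : Y -> O :=
  psup (fun chi => chi = phi \/ chi = psi).
Definition otop : O := oinf L (fun _ => False).
Definition obot : O := osup L (fun _ => False).

Definition join_preserving (Y Z : Type) (g : (Y -> O) -> (Z -> O)) :=
  forall S : (Y -> O) -> Prop,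
    g (psup S) = psup (fun chi => exists phi, S phi /\ chi = g phi).
End Predicates.

Section Algebras.
Variables (T : Type -> Type) (W : whileMonad T).
Variables (O : Type) (L : completeLattice O).

Definition EMalgebra (o : T O -> O) :=
  (forall w : O, o (ret W w) = w) /\
  (forall t : T (T O), o (tmap W o t) = o (bind W t (fun u => u))).

Definition meet_preserving (o : T O -> O) :=
  forall (Y : Type) (S : (Y -> O) -> Prop),
    (fun t : T Y => o (tmap W (pinf L S) t))
    = pinf L (fun chi => exists phi, S phi /\ chi = (fun t => o (tmap W phi t))).

Definition wp (o : T O -> O) (Y Z : Type) (f : Y -> T Z) (phi : Z -> O) : Y -> O :=
  fun y => o (tmap W phi (f y)).

(* sp^o(f) = the left adjoint of wp^o(f), given by the standard formula
   sp(f)(psi) = /\ { phi | psi <= wp(f)(phi) }  (it is the left adjoint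
   whenever wp^o(f) preserves arbitrary meets, e.g. for o meet-preserving) *)
Definition sp (o : T O -> O) (Y Z : Type) (f : Y -> T Z) (psi : Y -> O) : Z -> O :=
  pinf L (fun phi => ple L psi (wp o f phi)).
End Algebras.

Definition grd (O : Type) (L : completeLattice O) (V : Type) (X : finType)
  (Bc : Type) (bsem : Bc -> (X -> V) -> bool) (b : Bc) (v : bool) : (X -> V) -> O :=
  fun rho => if bsem b rho == v then otop L else obot L.

Definition PsiW (O : Type) (L : completeLattice O) (V : Type) (X : finType)
  (Bc : Type) (bsem : Bc -> (X -> V) -> bool) (b : Bc)
  (Pc : ((X -> V) -> O) -> ((X -> V) -> O))
  (g : ((X -> V) -> O) -> ((X -> V) -> O)) : ((X -> V) -> O) -> ((X -> V) -> O) :=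
  fun phi => pjoin L (g (Pc (pmeet L phi (grd L bsem b true))))
                     (pmeet L phi (grd L bsem b false)).

From mathcomp Require Import all_boot.
From Stdlib Require Import FunctionalExtensionality Setoid.

Set Implicit Arguments.
Unset Strict Implicit.
Unset Printing Implicit Defensive.

(* Since [o] preserves meets, [wp f] is monotone and [sp f] is its left
   adjoint, so [sp] is determined by [wp]. The Eilenberg-Moore laws make [wp]
   contravariantly functorial ([wp eta = id], [wp (g • f) = wp f o wp g]);
   by adjointness [sp eta = id], [sp (g • f) = sp g o sp f], and [sp] of a
   conditional is the join of [sp] of its branches applied to the guarded
   predicates. As [Phi f] is the conditional of [f • [[P]]] and [eta], this
   is exactly [Psi (sp f)]. Join preservation holds because [Psi g] is built
   from left adjoints ([sp], and meeting with a guard, adjoint to implication)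
   and [g] by composition and binary joins. *)

Section PredicateLattice.
Variables (O : Type) (L : completeLattice O).

Lemma ole_otop z : ole L z (otop L).
Proof. by apply: oinf_glb. Qed.

Lemma obot_ole z : ole L (obot L) z.
Proof. by apply: osup_lub. Qed.

Lemma eq_upper_bounds (Y : Type) (A B : Y -> O) :
  (forall chi, ple L A chi <-> ple L B chi) -> A = B.
Proof.
move=> AB; apply: functional_extensionality => y; apply: ole_antisym.
- by apply: (proj2 (AB B)) => z; apply: ole_refl.
- by apply: (proj1 (AB A)) => z; apply: ole_refl.
Qed.

Lemma ple_psup (Y : Type) (S : (Y -> O) -> Prop) chi :
  ple L (psup L S) chi <-> (forall phi, S phi -> ple L phi chi).
Proof.
split=> [le_S_chi phi Sphi y | le_chi y].
- by apply: ole_trans (le_S_chi y); apply: osup_ub; exists phi.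
- by apply: osup_lub => _ [phi [Sphi ->]]; apply: le_chi.
Qed.

Lemma ple_psup_image (Y Z : Type) (F : (Y -> O) -> (Z -> O))
    (S : (Y -> O) -> Prop) chi :
  ple L (psup L (fun c => exists phi, S phi /\ c = F phi)) chi <->
  (forall phi, S phi -> ple L (F phi) chi).
Proof.
rewrite ple_psup; split=> [le_chi phi Sphi | le_chi _ [phi [Sphi ->]]].
- by apply: le_chi; exists phi.
- exact: le_chi.
Qed.

Lemma ple_pjoin (Y : Type) (phi psi chi : Y -> O) :
  ple L (pjoin L phi psi) chi <-> ple L phi chi /\ ple L psi chi.
Proof.
rewrite ple_psup; split=> [le_chi | [le_phi le_psi] _ [->|->] //].
by split; apply: le_chi; [left | right].
Qed.

Lemma pmeet_l (Y : Type) (phi chi : Y -> O) :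
  ple L phi chi -> pmeet L phi chi = phi.
Proof.
move=> le_phi_chi; apply: functional_extensionality => y; apply: ole_antisym.
- by apply: oinf_lb; exists phi; split; [left |].
- apply: oinf_glb => _ [c [[->|->] ->]]; [exact: ole_refl | exact: le_phi_chi].
Qed.


Lemma join_preservingP (Y Z : Type) (F : (Y -> O) -> (Z -> O)) :
  join_preserving L F <->
  (forall S chi, ple L (F (psup L S)) chi <-> (forall phi, S phi -> ple L (F phi) chi)).
Proof.
split=> [F_join S chi | F_join S].
- by rewrite F_join ple_psup_image.
- by apply: eq_upper_bounds => chi; rewrite F_join ple_psup_image.
Qed.

Lemma left_adjoint_join_preserving (Y Z : Type)
    (F : (Y -> O) -> (Z -> O)) (G : (Z -> O) -> (Y -> O)) :
  (forall psi chi, ple L (F psi) chi <-> ple L psi (G chi)) ->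
  join_preserving L F.
Proof.
move=> adj; apply/join_preservingP => S chi; rewrite adj ple_psup.
by split=> le_G phi /le_G; rewrite adj.
Qed.

Lemma join_preserving_comp (Y Z U : Type)
    (F : (Z -> O) -> (U -> O)) (G : (Y -> O) -> (Z -> O)) :
  join_preserving L F -> join_preserving L G ->
  join_preserving L (fun phi => F (G phi)).
Proof.
move=> /join_preservingP F_join G_join; apply/join_preservingP => S chi.
rewrite G_join F_join; split=> [le_chi phi Sphi | le_chi _ [phi [Sphi ->]]].
- by apply: le_chi; exists phi.
- exact: le_chi.
Qed.

Lemma join_preserving_pjoin (Y Z : Type) (F G : (Y -> O) -> (Z -> O)) :
  join_preserving L F -> join_preserving L G ->
  join_preserving L (fun phi => pjoin L (F phi) (G phi)).
Proof.
move=> /join_preservingP F_join /join_preservingP G_join.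
apply/join_preservingP => S chi; rewrite ple_pjoin F_join G_join.
split=> [[le_F le_G] phi Sphi | le_FG]; first by apply/ple_pjoin; split; auto.
by split=> phi /le_FG /ple_pjoin [].
Qed.

Section Guards.
Variables (V : Type) (X : finType) (Bc : Type).
Variables (bsem : Bc -> (X -> V) -> bool) (b : Bc) (v : bool).

Lemma pmeet_grdE (phi : (X -> V) -> O) rho :
  pmeet L phi (grd L bsem b v) rho
  = if bsem b rho == v then phi rho else obot L.
Proof.
rewrite /grd; case E: (bsem b rho == v); apply: ole_antisym.
- by apply: oinf_lb; exists phi; split; [left |].
- by apply: oinf_glb => _ [c [[->|->] ->]]; rewrite /grd ?E;
    [exact: ole_refl | exact: ole_otop].
- by apply: oinf_lb; exists (grd L bsem b v); split; [right | rewrite /grd E].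
- exact: obot_ole.
Qed.

Lemma ple_pmeet_grd (phi chi : (X -> V) -> O) :
  ple L (pmeet L phi (grd L bsem b v)) chi <->
  (forall rho, bsem b rho = v -> ole L (phi rho) (chi rho)).
Proof.
split=> [le_chi rho b_rho | le_chi rho]; move: (le_chi rho).
- by rewrite pmeet_grdE b_rho eqxx.
- by rewrite pmeet_grdE; case: eqP => [b_rho /(_ b_rho) // | _ _]; exact: obot_ole.
Qed.

Lemma join_preserving_pmeet_grd :
  join_preserving L (fun phi => pmeet L phi (grd L bsem b v)).
Proof.
apply: (left_adjoint_join_preserving
          (G := fun chi rho => if bsem b rho == v then chi rho else otop L)).
move=> psi chi; rewrite ple_pmeet_grd.
split=> [le_chi rho | le_chi rho b_rho]; last by move: (le_chi rho); rewrite b_rho eqxx.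
by case: eqP => [/le_chi | _] //; exact: ole_otop.
Qed.

End Guards.

End PredicateLattice.

Section WeakestPreconditions.
Variables (T : Type -> Type) (W : whileMonad T).
Variables (O : Type) (L : completeLattice O) (o : T O -> O).
Hypotheses (o_EM : EMalgebra W o) (o_meet : meet_preserving W L o).

Lemma bind_tmap (A B C : Type) (f : A -> B) (k : B -> T C) (t : T A) :
  bind W (tmap W f t) k = bind W t (fun a => k (f a)).
Proof.
rewrite /tmap bind_assoc; congr (bind W t).
by apply: functional_extensionality => a; rewrite bind_ret_l.
Qed.

Lemma wp_ret (Y : Type) (chi : Y -> O) : wp W o (@ret T W Y) chi = chi.
Proof.
apply: functional_extensionality => y.
by rewrite /wp /tmap bind_ret_l (proj1 o_EM).
Qed.

Lemma wp_kcomp (X Y Z : Type) (f : X -> T Y) (g : Y -> T Z) (chi : Z -> O) :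
  wp W o (kcomp W g f) chi = wp W o f (wp W o g chi).
Proof.
apply: functional_extensionality => x.
have tmap_wp : tmap W (wp W o g chi) (f x)
                 = tmap W o (tmap W (fun y => tmap W chi (g y)) (f x)).
  by rewrite {2}/tmap bind_tmap.
by rewrite /wp tmap_wp (proj2 o_EM) bind_tmap /kcomp /tmap bind_assoc.
Qed.

Lemma wp_pinf (Y Z : Type) (h : Y -> T Z) (S : (Z -> O) -> Prop) y :
  wp W o h (pinf L S) y = oinf L (fun w => exists phi, S phi /\ w = wp W o h phi y).
Proof.
rewrite {1}/wp (congr1 (fun F => F (h y)) (o_meet S)).
apply: ole_antisym; apply: oinf_glb.
- by move=> _ [phi [Sphi ->]]; apply: oinf_lb; exists (fun t => o (tmap W phi t));
    split=> //; exists phi.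
- by move=> _ [_ [[phi [Sphi ->]] ->]]; apply: oinf_lb; exists phi.
Qed.

Lemma wp_mono (Y Z : Type) (h : Y -> T Z) (phi chi : Z -> O) :
  ple L phi chi -> ple L (wp W o h phi) (wp W o h chi).
Proof.
move=> /pmeet_l <- y; rewrite wp_pinf.
by apply: oinf_lb; exists chi; split; [right |].
Qed.

Lemma ple_sp (Y Z : Type) (h : Y -> T Z) (psi : Y -> O) (chi : Z -> O) :
  ple L (sp W L o h psi) chi <-> ple L psi (wp W o h chi).
Proof.
split=> [le_chi | le_wp y]; last by apply: oinf_lb; exists chi.
have unit : ple L psi (wp W o h (sp W L o h psi)).
  by move=> y; rewrite wp_pinf; apply: oinf_glb => _ [phi [le_phi ->]]; apply: le_phi.
by move=> y; apply: ole_trans (unit y) _; apply: wp_mono.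
Qed.

Lemma join_preserving_sp (Y Z : Type) (h : Y -> T Z) :
  join_preserving L (sp W L o h).
Proof. exact: (left_adjoint_join_preserving (ple_sp h)). Qed.

Lemma sp_ret (Y : Type) (psi : Y -> O) : sp W L o (@ret T W Y) psi = psi.
Proof. by apply: (eq_upper_bounds (L := L)) => chi; rewrite ple_sp wp_ret. Qed.

Lemma sp_kcomp (X Y Z : Type) (f : X -> T Y) (g : Y -> T Z) (psi : X -> O) :
  sp W L o (kcomp W g f) psi = sp W L o g (sp W L o f psi).
Proof. by apply: (eq_upper_bounds (L := L)) => chi; rewrite !ple_sp wp_kcomp. Qed.

Lemma sp_ite (V : Type) (X : finType) (Bc : Type) (Z : Type)
    (bsem : Bc -> (X -> V) -> bool) (b : Bc) (h1 h2 : (X -> V) -> T Z)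
    (phi : (X -> V) -> O) :
  sp W L o (fun rho => if bsem b rho then h1 rho else h2 rho) phi
  = pjoin L (sp W L o h1 (pmeet L phi (grd L bsem b true)))
            (sp W L o h2 (pmeet L phi (grd L bsem b false))).
Proof.
apply: (eq_upper_bounds (L := L)) => chi; rewrite ple_pjoin !ple_sp !ple_pmeet_grd.
split=> [le_wp | [le_wp1 le_wp2] rho].
- by split=> rho b_rho; move: (le_wp rho); rewrite /wp b_rho.
- by rewrite /wp; case: ifP => [/le_wp1 | /le_wp2].
Qed.

End WeakestPreconditions.

Theorem mainTheorem3
  (T : Type -> Type) (W : whileMonad T)
  (O : Type) (L : completeLattice O)
  (o : T O -> O) (Hem : EMalgebra W o) (Hmeet : meet_preserving W L o)
  (V : Type) (X : finType) (E Bc : Type)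
  (bsem : Bc -> (X -> V) -> bool) (asem : X -> E -> (X -> V) -> T (X -> V))
  (P : prog X E Bc) (b : Bc) :
  let Pt := psem W bsem asem P in
  let Phi := PhiW W bsem b Pt in
  let Psi := PsiW L bsem b (sp W L o Pt) in
  (forall g : ((X -> V) -> O) -> ((X -> V) -> O),
      join_preserving L g -> join_preserving L (Psi g)) /\
  (forall f : (X -> V) -> T (X -> V),
      Psi (sp W L o f) = sp W L o (Phi f)).
Proof.
move=> Pt Phi Psi; split=> [g g_join | f].
- apply: join_preserving_pjoin; last exact: join_preserving_pmeet_grd.
  apply: join_preserving_comp g_join _.
  apply: join_preserving_comp; last exact: join_preserving_pmeet_grd.
  exact: join_preserving_sp.
- apply: functional_extensionality => phi.
  by rewrite /Phi /PhiW sp_ite // sp_kcomp // sp_ret.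
Qed.
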